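(* For every integer $n\geq 4$, the lexicographically smallest highly bispecial binary word of length $n$ is $001^{n-3}0$, except for $n=6$, for which the lexicographically smallest highly bispecial binary word of length $6$ is $001011$.
   Context: Words are over the binary alphabet $\{0,1\}$; the lexicographic order on words of the same length is induced by $0<1$. A factor of a word $u$ is any (possibly empty) contiguous block of $u$. A factor $x$ of $u$ is left special if both $0x$ and $1x$ are factors of $u$, right special if both $x0$ and $x1$ are factors of $u$, and bispecial if it is both left and right special (the empty word may be bispecial). A binary word of length $n$ is highly bispecial if its number of distinct bispecial factors is maximum among all binary words of length $n$. *)

From mathcomp Require Import all_boot.
Set Implicit Arguments. Unset Strict Implicit. Unset Printing Implicit Defensive.

(* Binary words: seq bool, with false = letter 0 and true = letter 1. *)

Definition factors (u : seq bool) : seq (seq bool) :=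
  [::] :: flatten [seq [seq take l (drop i u) | l <- iota 1 (size u - i)]
                  | i <- iota 0 (size u)].

Definition is_factor (x u : seq bool) : bool := infix x u.

Definition left_special (u x : seq bool) : bool :=
  is_factor (false :: x) u && is_factor (true :: x) u.
Definition right_special (u x : seq bool) : bool :=
  is_factor (rcons x false) u && is_factor (rcons x true) u.
Definition bispecial (u x : seq bool) : bool :=
  is_factor x u && left_special u x && right_special u x.

Definition num_bispecial (u : seq bool) : nat :=
  size (undup [seq x <- factors u | bispecial u x]).

Definition highly_bispecial (w : seq bool) : Prop :=
  forall v : seq bool, size v = size w -> num_bispecial v <= num_bispecial w.

Fixpoint lex_le (u v : seq bool) : bool :=
  match u, v with
  | [::], _ => true
  | _ :: _, [::] => false
  | a :: u', b :: v' => (~~ a && b) || ((a == b) && lex_le u' v')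
  end.

Definition lex_smallest_highly_bispecial (n : nat) (w : seq bool) : Prop :=
  [/\ size w = n, highly_bispecial w &
      forall v : seq bool, size v = n -> highly_bispecial v -> lex_le w v].

From mathcomp Require Import all_boot.
From mathcomp Require Import zify.
Set Implicit Arguments. Unset Strict Implicit. Unset Printing Implicit Defensive.

(* Extend a factor of w greedily to the right, letter by letter and preferring 0,
   until it has no right extension; the result is a suffix of w.  Starting from
   the empty word and from x1 for each right-special factor x, these greedy paths
   end at pairwise distinct suffixes, all longer than any right-extendable suffix
   t of w.  So w has fewer than |w| - |t| right-special factors, hence at most
   |w| - 2 bispecial ones, and 0 0 1^(n-3) 0 attains n - 2.  A word of length n
   lexicographically below it with n - 2 bispecial factors starts with 00, which
   then occurs only as a prefix, and ends with a length-2 factor occurring only as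
   a suffix; this forces the word 0 (01)^r 1.  For r >= 3 the factor 101 is right
   special but not bispecial and costs one more, which leaves 001011. *)

Section Words.

Variable T : eqType.
Implicit Types s w x z : seq T.

Lemma prefix_of_prefix s1 s2 s : prefix s1 s -> prefix s2 s ->
  size s1 <= size s2 -> prefix s1 s2.
Proof.
rewrite !prefixE => /eqP h1 /eqP h2 le12.
by rewrite -h2 take_takel // h1.
Qed.

Lemma prefix_eq_size s1 s2 s : prefix s1 s -> prefix s2 s ->
  size s1 = size s2 -> s1 = s2.
Proof. by rewrite !prefixE => /eqP h1 /eqP h2 eq12; rewrite -h1 -h2 eq12. Qed.

Lemma suffix_of_suffix s1 s2 s : suffix s1 s -> suffix s2 s ->
  size s1 <= size s2 -> suffix s1 s2.
Proof. by move=> h1 h2 le12; apply: prefix_of_prefix h1 h2 _; rewrite !size_rev. Qed.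

Lemma suffix_eq_size s1 s2 s : suffix s1 s -> suffix s2 s ->
  size s1 = size s2 -> s1 = s2.
Proof.
move=> h1 h2 eq12; apply: (can_inj revK).
by apply: prefix_eq_size h1 h2 _; rewrite !size_rev.
Qed.

Lemma infix_extl (a : T) x w : infix x w -> exists c, infix (c :: x) (a :: w).
Proof.
case/infixP=> [p [q ->]]; exists (last a p).
by rewrite -cat_cons (lastI a p) cat_rcons -cat_cons infix_infix.
Qed.

Lemma infix_extr (a : T) x w : infix x w -> exists c, infix (rcons x c) (rcons w a).
Proof.
rewrite -infix_rev => /(infix_extl a) [c]; exists c.
by rewrite -infix_rev !rev_rcons.
Qed.

Lemma no_right_ext_suffix z w :
  (forall a, ~~ infix (rcons z a) w) -> infix z w -> suffix z w.
Proof.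
move=> no_ext /infixP [p [[|a q] def_w]]; first by rewrite def_w cats0 suffix_suffix.
by have := no_ext a; rewrite def_w -cat_rcons infix_infix.
Qed.

End Words.

Lemma rcons_nseq (T : Type) i (x : T) : rcons (nseq i x) x = nseq i.+1 x.
Proof. by elim: i => //= i ->. Qed.

Lemma exists_last2 (T : Type) (s : seq T) : 1 < size s -> exists p x y, s = p ++ [:: x; y].
Proof.
case/lastP: s => [|s y] //; case/lastP: s => [|s x] // _.
by exists s, x, y; rewrite -!cats1 -catA.
Qed.

Section GreedyExtension.

Variable w : seq bool.

Fixpoint greedy_ext (f : nat) (y : seq bool) : seq bool :=
  if f is f'.+1 then
    if infix (rcons y false) w then greedy_ext f' (rcons y false)
    else if infix (rcons y true) w then greedy_ext f' (rcons y true) else y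
  else y.

Lemma greedy_ext_infix f y : infix y w -> infix (greedy_ext f y) w.
Proof.
elim: f y => [|f IHf] y //= y_w.
by case: ifP => [/IHf // | _]; case: ifP => [/IHf // | _].
Qed.

Lemma prefix_greedy_ext f y : prefix y (greedy_ext f y).
Proof.
elim: f y => [|f IHf] y /=; first exact: prefix_refl.
by do 2?case: ifP => _; rewrite ?prefix_refl //;
  apply: prefix_trans (prefix_rcons _ _) (IHf _).
Qed.

Lemma greedy_ext_maximal f y a : infix y w -> size w - size y <= f ->
  ~~ infix (rcons (greedy_ext f y) a) w.
Proof.
elim: f y => [|f IHf] y y_w le_f /=.
  by rewrite leqn0 subn_eq0 in le_f; apply/negP => /size_infix; rewrite size_rcons ltnNge le_f.
have step b : infix (rcons y b) w -> ~~ infix (rcons (greedy_ext f (rcons y b)) a) w.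
  by move=> yb_w; apply: IHf; rewrite // size_rcons subnS -subn1 leq_subLR add1n.
case: ifP => [/step // | y0_w]; case: ifP => [/step // | y1_w].
by case: a {IHf step}; rewrite ?y0_w ?y1_w.
Qed.

Lemma greedy_ext_prefers_false f y z : size y <= size z ->
  prefix (rcons z true) (greedy_ext f y) -> ~~ infix (rcons z false) w.
Proof.
elim: f y => [|f IHf] y le_yz /=.
  by move/size_prefix; rewrite size_rcons ltnNge le_yz.
have step (b : bool) : (b -> ~~ infix (rcons y false) w) ->
    prefix (rcons z true) (greedy_ext f (rcons y b)) -> ~~ infix (rcons z false) w.
  move=> b_y0 pz; case: (ltngtP (size y) (size z)) => [lt_yz | | eq_yz].
  - by apply: IHf pz; rewrite size_rcons.
  - by rewrite ltnNge le_yz.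
  have: rcons z true = rcons y b.
    by apply: prefix_eq_size pz (prefix_greedy_ext _ _) _; rewrite !size_rcons eq_yz.
  by case/rcons_inj=> -> b_true; apply: b_y0; rewrite -b_true.
case: ifP => [_ | y0_w]; first exact: step.
case: ifP => [_ | _]; first by apply: step; rewrite y0_w.
by move/size_prefix; rewrite size_rcons ltnNge le_yz.
Qed.

End GreedyExtension.

Lemma ltn_size_no_right_ext (w t z : seq bool) b :
  suffix t w -> infix (rcons t b) w ->
  suffix z w -> (forall a, ~~ infix (rcons z a) w) -> size t < size z.
Proof.
move=> t_w tb_w z_w no_ext; rewrite ltnNge; apply/negP => le_zt.
have /suffixP [s def_t] := suffix_of_suffix z_w t_w le_zt.
have := no_ext b; rewrite (infix_trans _ tb_w) // def_t rcons_cat.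
exact: suffix_infix.
Qed.

Section RightSpecialBound.

Variables (w t : seq bool) (b : bool).
Hypotheses (t_suffix : suffix t w) (tb_infix : infix (rcons t b) w).

Let leaf := greedy_ext w (size w).

Lemma suffix_leaf y : infix y w -> suffix (leaf y) w.
Proof.
move=> y_w; apply: no_right_ext_suffix; last exact: greedy_ext_infix.
by move=> a; apply: greedy_ext_maximal; rewrite ?leq_subr.
Qed.

Lemma size_leaf y : infix y w -> size t < size (leaf y).
Proof.
move=> y_w; apply: ltn_size_no_right_ext t_suffix tb_infix (suffix_leaf y_w) _.
by move=> a; apply: greedy_ext_maximal; rewrite ?leq_subr.
Qed.

Lemma leaf_neq_rcons_true y x : right_special w x -> size y <= size x ->
  leaf y != leaf (rcons x true).
Proof.
rewrite /right_special /is_factor => /andP [x0_w _] le_yx; apply/eqP => eq_leaf.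
have pfx : prefix (rcons x true) (leaf y) by rewrite eq_leaf; exact: prefix_greedy_ext.
by rewrite (negbTE (greedy_ext_prefers_false le_yx pfx)) in x0_w.
Qed.

Lemma size_right_special_lt (S : seq (seq bool)) :
  uniq S -> {in S, forall x, right_special w x} -> size S < size w - size t.
Proof.
move=> uniq_S rs_S.
pose Y := [::] :: [seq rcons x true | x <- S].
have Y_infix y : y \in Y -> infix y w.
  rewrite inE => /predU1P [-> | /mapP [x /rs_S /andP [_ x1_w] ->]] //.
  exact: infix0s.
have leaf_inj y y' : y \in Y -> y' \in Y -> leaf y = leaf y' ->
    size y <= size y' -> y = y'.
  move=> _; rewrite inE => /predU1P [-> | /mapP [x' /rs_S x'_rs ->]] eq_leaf le_yy'.
    by apply/size0nil; apply/eqP; rewrite -leqn0.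
  have [le_yx' | lt_x'y] := leqP (size y) (size x').
    by move/eqP: eq_leaf; rewrite (negbTE (leaf_neq_rcons_true x'_rs le_yx')).
  apply: (@prefix_eq_size _ _ _ (leaf y)); first exact: prefix_greedy_ext.
    by rewrite eq_leaf; exact: prefix_greedy_ext.
  by apply/eqP; rewrite eqn_leq le_yy' size_rcons.
have uniq_Y : uniq Y.
  rewrite /= map_inj_uniq ?uniq_S ?andbT; last by move=> x x' /rcons_inj [].
  by apply/mapP => -[x _ /esym/eqP]; rewrite -size_eq0 size_rcons.
have : uniq [seq size (leaf y) | y <- Y].
  rewrite map_inj_in_uniq // => y y' yY y'Y /= eq_size.
  have eq_leaf : leaf y = leaf y'.
    exact: suffix_eq_size (suffix_leaf (Y_infix _ yY)) (suffix_leaf (Y_infix _ y'Y)) _.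
  have [le_yy' | /ltnW le_y'y] := leqP (size y) (size y'); first exact: leaf_inj.
  by apply/esym/leaf_inj.
move/uniq_leq_size => /(_ (iota (size t).+1 (size w - size t))).
rewrite size_map size_iota [size Y]/= size_map; apply=> _ /mapP [y yY ->].
have := size_suffix (suffix_leaf (Y_infix _ yY)).
have := size_leaf (Y_infix _ yY).
rewrite mem_iota => lt_t le_w; rewrite lt_t addSn subnKC ?ltnS //.
exact: leq_trans (ltnW lt_t) le_w.
Qed.

End RightSpecialBound.

Lemma mem_factors x u : (x \in factors u) = infix x u.
Proof.
apply/idP/idP.
  rewrite inE => /predU1P [-> | /flattenP [_ /mapP [i _ ->] /mapP [l _ ->]]].
    exact: infix0s.
  exact: infix_trans (infix_take _ _) (infix_drop _ _).
case: x => [|a x]; first by rewrite inE eqxx.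
case/infixP=> [p [q ->]]; rewrite inE /=; apply/flattenP.
set v := p ++ _.
have lt_p : size p < size v by rewrite /v !size_cat /=; lia.
exists [seq take l (drop (size p) v) | l <- iota 1 (size v - size p)].
  by apply/mapP; exists (size p); rewrite // mem_iota.
apply/mapP; exists (size x).+1; first by rewrite mem_iota /v !size_cat /= size_cat; lia.
by rewrite /v drop_size_cat //= take_size_cat.
Qed.

Definition bispecials (w : seq bool) : seq (seq bool) :=
  undup [seq x <- factors w | bispecial w x].

Lemma num_bispecialE w : num_bispecial w = size (bispecials w).
Proof. by []. Qed.

Lemma mem_bispecials w x : (x \in bispecials w) = bispecial w x.
Proof.
rewrite mem_undup mem_filter mem_factors andb_idr //.
by case/andP=> /andP [].
Qed.

Lemma num_bispecial_lt_suffix w t b : suffix t w -> infix (rcons t b) w ->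
  num_bispecial w < size w - size t.
Proof.
move=> t_w tb_w; rewrite num_bispecialE.
apply: (size_right_special_lt t_w tb_w) => [|x]; first exact: undup_uniq.
by rewrite mem_bispecials => /andP [].
Qed.

Lemma num_bispecial_ltS_suffix w t b x : suffix t w -> infix (rcons t b) w ->
  right_special w x -> ~~ bispecial w x -> (num_bispecial w).+1 < size w - size t.
Proof.
move=> t_w tb_w x_rs x_nbs; rewrite num_bispecialE.
apply: (@size_right_special_lt _ _ _ t_w tb_w (x :: bispecials w)).
  by rewrite /= mem_bispecials x_nbs undup_uniq.
by move=> y; rewrite inE mem_bispecials => /predU1P [-> | /andP []].
Qed.

Lemma bispecial_rev w x : bispecial (rev w) (rev x) = bispecial w x.
Proof.
rewrite /bispecial /left_special /right_special /is_factor.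
by rewrite -!rev_rcons -!rev_cons !infix_rev andbAC.
Qed.

Lemma num_bispecial_rev w : num_bispecial (rev w) = num_bispecial w.
Proof.
rewrite !num_bispecialE -(size_map rev); apply: perm_size.
apply: uniq_perm => [||x]; rewrite ?(map_inj_uniq (can_inj revK)) ?undup_uniq //.
by rewrite -[in LHS](revK x) (mem_map (can_inj revK)) !mem_bispecials bispecial_rev.
Qed.

Lemma num_bispecial_lt_prefix w t b : prefix t w -> infix (b :: t) w ->
  num_bispecial w < size w - size t.
Proof.
move=> t_w bt_w; rewrite -num_bispecial_rev -size_rev -(size_rev t).
by apply: (num_bispecial_lt_suffix (b := b)); rewrite ?suffix_rev // -rev_cons infix_rev.
Qed.

Lemma num_bispecial_le1 w a : (forall b, ~~ infix [:: a; b] w) -> num_bispecial w <= 1.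
Proof.
move=> no_ext; rewrite num_bispecialE.
apply: (@uniq_leq_size _ _ [:: [::]]) => [|x]; first exact: undup_uniq.
rewrite mem_bispecials inE => /andP [/andP [_ /andP [x0 x1]] _].
case: x x0 x1 => [|y x] // x0 x1.
have : infix ([:: a; y] ++ x) w by case: a {no_ext}.
by move/catr_infix; rewrite (negbTE (no_ext y)).
Qed.

Lemma num_bispecial_le w : 2 < size w -> num_bispecial w <= size w - 2.
Proof.
case/lastP: w => [|w a] // lt2.
have [[c ac] | no_ext] :
    (exists c, infix [:: a; c] (rcons w a)) \/ forall c, ~~ infix [:: a; c] (rcons w a).
- case: (boolP (infix [:: a; false] (rcons w a))) => [a0 | na0]; first by left; exists false.
  case: (boolP (infix [:: a; true] (rcons w a))) => [a1 | na1]; first by left; exists true.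
  by right; case.
- have := num_bispecial_lt_suffix (t := [:: a]) _ ac.
  rewrite -cats1 suffix_suffix => /(_ isT) /=; lia.
- by apply: leq_trans (num_bispecial_le1 no_ext) _; lia.
Qed.

Definition w001k0 (k : nat) : seq bool := [:: false; false] ++ nseq k true ++ [:: false].

Lemma size_w001k0 k : size (w001k0 k) = k.+3.
Proof. by rewrite !size_cat size_nseq /=; lia. Qed.

Lemma infix_ones_w001k0 i k : i <= k ->
  [/\ infix (false :: nseq i true) (w001k0 k), infix (nseq i true) (w001k0 k)
    & infix (rcons (nseq i true) false) (w001k0 k)].
Proof.
move=> le_ik.
have left1 : infix (false :: nseq i true) (w001k0 k).
  rewrite /w001k0 -(subnKC le_ik) nseqD -catA.
  exact: (infix_infix [:: false] (false :: nseq i true)).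
split=> //; first exact: consl_infix left1.
rewrite /w001k0 -(subnK le_ik) nseqD -catA catA -cats1.
exact: suffix_infix.
Qed.

Lemma bispecial_ones_w001k0 i k : i < k -> bispecial (w001k0 k) (nseq i true).
Proof.
move=> lt_ik; have [l0 ones r0] := infix_ones_w001k0 (ltnW lt_ik).
have [_ l1 _] := infix_ones_w001k0 lt_ik.
by rewrite /bispecial /left_special /right_special /is_factor rcons_nseq ones l0 l1 r0.
Qed.

Lemma bispecial_zero_w001k0 k : 0 < k -> bispecial (w001k0 k) [:: false].
Proof.
move=> k_gt0; have [_ _ r0] := infix_ones_w001k0 k_gt0.
have [l1 _ _] := infix_ones_w001k0 k_gt0.
have l0 : infix [:: false; false] (w001k0 k) by exact: prefix_infix.
by rewrite /bispecial /left_special /right_special /is_factor l0 l1 r0 (consl_infix l0).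
Qed.

Lemma num_bispecial_w001k0 k : k.+2 <= num_bispecial (w001k0 k.+1).
Proof.
rewrite num_bispecialE.
have -> : k.+2 = size ([:: false] :: [seq nseq i true | i <- iota 0 k.+1]).
  by rewrite /= size_map size_iota.
apply: uniq_leq_size => [|x].
  rewrite cons_uniq map_inj_uniq ?iota_uniq ?andbT; last first.
    by move=> i j /(congr1 size); rewrite !size_nseq.
  by apply/negP => /mapP [[|i] _].
rewrite inE mem_bispecials => /predU1P [-> | /mapP [i]]; first exact: bispecial_zero_w001k0.
by rewrite mem_iota => /andP [_ lt_i] ->; apply: bispecial_ones_w001k0.
Qed.

Lemma highly_bispecialP m w : size w = m.+4 ->
  highly_bispecial w <-> m.+2 <= num_bispecial w.
Proof.
move=> size_w; split=> [hb_w | le_w v size_v].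
  apply: leq_trans (num_bispecial_w001k0 m) (hb_w _ _).
  by rewrite size_w001k0 size_w.
have := @num_bispecial_le v; rewrite size_v size_w => /(_ isT) le_v.
exact: leq_trans le_v le_w.
Qed.

Lemma lex_le_trans u v w : lex_le u v -> lex_le v w -> lex_le u w.
Proof.
elim: u v w => [|a u IHu] [|b v] [|c w] //=.
by case: a; case: b; case: c => //=; apply: IHu.
Qed.

Lemma not_lex_le_ones_false k s : size s = k.+1 ->
  ~~ lex_le (nseq k true ++ [:: false]) s ->
  exists j c s', s = nseq j true ++ [:: false, c & s'].
Proof.
elim: k s => [|k IHk] [|[] s] //= [size_s].
  by case/IHk=> // j [c [s' ->]]; exists j.+1, c, s'.
by case: s size_s => // c s' _ _; exists 0, c, s'.
Qed.

Lemma alternating01 (u : seq bool) : head true u = false -> last false u = true ->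
  ~~ infix [:: false; false] u -> ~~ infix [:: true; true] u ->
  exists r, u = flatten (nseq r [:: false; true]).
Proof.
have [n] := ubnP (size u); elim: n u => // n IHn [|[] [|[] [|[] u]]] //; first by exists 1.
  by move=> _ _ _ _ /negP []; apply: (infix_infix [:: false] [:: true; true]).
rewrite ltnS => size_u _ last_u no00 no11.
have lt_u : size (false :: u) < n by exact: leq_trans (leqnSn _) size_u.
have no00' : ~~ infix [:: false; false] (false :: u).
  by apply: contra no00; apply: (infix_catl [:: false; true]).
have no11' : ~~ infix [:: true; true] (false :: u).
  by apply: contra no11; apply: (infix_catl [:: false; true]).
by have [r ->] := IHn _ lt_u erefl last_u no00' no11'; exists r.+1.
Qed.

Lemma not_lex_le_w001k0 k v : size v = k.+3 -> ~~ lex_le (w001k0 k) v ->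
  exists j c s, v = [:: false; false] ++ nseq j true ++ [:: false, c & s].
Proof.
rewrite /w001k0; case: v => [|[] [|[] s]] //= [/not_lex_le_ones_false ex_s].
by case/ex_s=> j [c [s' ->]]; exists j, c, s'.
Qed.

Section BelowW001k0.

Variables (m : nat) (v : seq bool).
Hypotheses (size_v : size v = m.+4) (num_v : m.+2 <= num_bispecial v).

Lemma prefix2_no_left_ext t b : prefix t v -> size t = 2 -> ~~ infix (b :: t) v.
Proof.
move=> t_v size_t; apply/negP => /(num_bispecial_lt_prefix t_v).
by rewrite size_v size_t; lia.
Qed.

Lemma suffix2_no_right_ext t b : suffix t v -> size t = 2 -> ~~ infix (rcons t b) v.
Proof.
move=> t_v size_t; apply/negP => /(num_bispecial_lt_suffix t_v).
by rewrite size_v size_t; lia.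
Qed.

Hypothesis lex_v : ~~ lex_le (w001k0 m.+1) v.

Lemma below_w001k0_ends : exists p, v = [:: false; false] ++ p ++ [:: true; true].
Proof.
have [j [c [s def_v]]] := not_lex_le_w001k0 size_v lex_v.
case: j def_v => [|j] def_v.
  by have := @prefix2_no_left_ext [:: false; false] false; rewrite def_v => /(_ isT erefl).
have [p [x [y def_v']]] : exists p x y, v = p ++ [:: x; y] by apply: exists_last2; rewrite size_v.
have no_ext b : ~~ infix [:: x; y; b] v.
  by apply: (@suffix2_no_right_ext [:: x; y]); rewrite // def_v' suffix_suffix.
have [x1 y1] : x = true /\ y = true.
  case: x y {def_v'} no_ext => [] [] no_ext //.
  - case/negP: (no_ext c); rewrite def_v -rcons_nseq cat_rcons catA.
    exact: (infix_infix _ [:: true; false; c] s).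
  - case: j def_v => [|j] def_v; first by have := no_ext false; rewrite def_v.
    by have := no_ext true; rewrite def_v /= prefix0s /=.
  - by have := no_ext true; rewrite def_v /= prefix0s.
rewrite {}x1 {}y1 in def_v'.
case: p def_v' => [|a [|b p]] def_v'; try by move: size_v; rewrite def_v'.
have [a0 b0] : a = false /\ b = false by move: def_v'; rewrite def_v => -[-> ->].
by exists p; rewrite def_v' a0 b0.
Qed.

Lemma below_w001k0_alternating :
  exists r, v = false :: rcons (flatten (nseq r [:: false; true])) true.
Proof.
have [p def_v] := below_w001k0_ends.
pose u := false :: rcons p true.
have def_vu : v = false :: rcons u true by rewrite def_v /u /= -!cats1 -catA.
have pre00 : prefix [:: false; false] v by rewrite def_v prefix_prefix.
have suf11 : suffix [:: true; true] v by rewrite def_v catA suffix_suffix.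
have no00 : ~~ infix [:: false; false] u.
  apply/negP => /(infix_extl false) [c c00].
  case/negP: (prefix2_no_left_ext c pre00 erefl).
  by apply: infix_trans c00 _; rewrite def_vu -cats1 -cat_cons prefix_infix.
have no11 : ~~ infix [:: true; true] u.
  apply/negP => /(infix_extr true) [c c11].
  case/negP: (suffix2_no_right_ext c suf11 erefl).
  by apply: infix_trans c11 _; rewrite def_vu infix_cons.
have [r def_u] := alternating01 (erefl : head true u = false) (last_rcons _ _ _) no00 no11.
by exists r; rewrite def_vu def_u.
Qed.

Lemma below_w001k0_eq : v = [:: false; false; true; false; true; true].
Proof.
have [[|[|[|r]]] def_v] := below_w001k0_alternating.
- by move: size_v; rewrite def_v.
- have m0 : m = 0 by move: size_v; rewrite def_v => -[].
  by move: lex_v; rewrite def_v m0.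
- exact: def_v.
have suf1011 : suffix [:: true; false; true; true] v.
  rewrite def_v -addn2 nseqD flatten_cat rcons_cat -cat_cons.
  exact: suffix_catr.
have suf1 : suffix [:: true] v by apply: suffix_trans suf1011.
have suf11 : suffix [:: true; true] v by apply: suffix_trans suf1011.
have rs101 : right_special v [:: true; false; true].
  by rewrite /right_special /is_factor (suffixW suf1011) andbT def_v.
have nbs101 : ~~ bispecial v [:: true; false; true].
  apply/negP => /andP [/andP [_ /andP [_ l1]] _].
  have /negP := suffix2_no_right_ext false suf11 erefl; apply.
  exact: (@catr_infix _ [:: true] [:: true; true; false]).
have r10 : infix [:: true; false] v by rewrite def_v.
have := num_bispecial_ltS_suffix suf1 r10 rs101 nbs101.
by rewrite size_v /=; lia.
Qed.

End BelowW001k0.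

Theorem mainTheorem4 (n : nat) : 4 <= n ->
  lex_smallest_highly_bispecial n
    (if n == 6 then [:: false; false; true; false; true; true]
     else [:: false; false] ++ nseq (n - 3) true ++ [:: false]).
Proof.
case: n => [|[|[|[|m]]]] // _; rewrite -/(w001k0 m.+1).
set w := if _ then _ else _.
have w6 : m = 2 -> w = [:: false; false; true; false; true; true] by move=> m2; rewrite /w m2.
have [size_w num_w] : size w = m.+4 /\ m.+2 <= num_bispecial w.
  rewrite /w; case: eqP => [[->] // | _].
  by rewrite size_w001k0 num_bispecial_w001k0.
split=> // [|v size_v /(highly_bispecialP size_v) num_v]; first exact/(highly_bispecialP size_w).
apply/contraT => lex_wv.
have lex_v : ~~ lex_le (w001k0 m.+1) v.
  move: lex_wv; rewrite /w; case: eqP => [[m2] | _] //; rewrite m2.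
  by apply: contra; apply: lex_le_trans.
have def_v := below_w001k0_eq size_v num_v lex_v.
have m2 : m = 2 by move: size_v; rewrite def_v => -[].
by move: lex_wv; rewrite w6 // def_v.
Qed.
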